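(* Let $(X,\mathcal U)$ be a non-archimedean uniform space and $\mathcal B$ a base of $\mathcal U$ consisting of equivalence relations. Realize $F_{NA}(X,\mathcal U)$ and $F^b_{NA}(X,\mathcal U)$ on the abstract free group $F(X)$ with $i(x)=x$. Then: (1) the family of subgroups $\{[V_\psi]:\psi\in\mathcal B^{F(X)}\}$ is a base of neighborhoods of the identity in $F_{NA}(X,\mathcal U)$; (2)(a) the family of normal subgroups $\{[\tilde\varepsilon]:\varepsilon\in\mathcal B\}$ is a base of neighborhoods of the identity in $F^b_{NA}(X,\mathcal U)$; (b) the topology of $F^b_{NA}(X,\mathcal U)$ is the weak topology generated by the homomorphisms $\overline{f_\varepsilon}\colon F(X)\to F(X/\varepsilon)$, $\varepsilon\in\mathcal B$, where each $F(X/\varepsilon)$ is discrete.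
   Context: A uniform space is non-archimedean if its uniformity has a base of equivalence relations. A topological group is non-archimedean if it has a local base at the identity of open subgroups, balanced if its left and right uniformities coincide. $F_{NA}(X,\mathcal U)$ (resp. $F^b_{NA}(X,\mathcal U)$) is the non-archimedean (resp. balanced non-archimedean) Hausdorff group with uniformly continuous $i\colon X\to G$ (two-sided uniformity) through which every uniformly continuous map into such a group factors uniquely by a continuous homomorphism; both are algebraically free on $i(X)$. In $F(X)$ let $j_2(\varepsilon)=\{x^{-1}y:(x,y)\in\varepsilon\}$, $j_2^*(\varepsilon)=\{xy^{-1}:(x,y)\in\varepsilon\}$; for $\psi\colon F(X)\to\mathcal B$ let $V_\psi=\bigcup_{w\in F(X)} w\big(j_2(\psi(w))\cup j_2^*(\psi(w))\big)w^{-1}$, and $\tilde\varepsilon=\bigcup_{w\in F(X)} w\big(j_2(\varepsilon)\cup j_2^*(\varepsilon)\big)w^{-1}$. For a symmetric set $A$, $[A]=\bigcup_n A^n$ is the subgroup it generates. $X/\varepsilon$ is the quotient set, $f_\varepsilon\colon X\to X/\varepsilon$ the quotient map, and $\overline{f_\varepsilon}\colon F(X)\to F(X/\varepsilon)$ its homomorphic extension. *)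

From HB Require Import structures.
From mathcomp Require Import all_boot.
From mathcomp Require Import boolp classical_sets topology.

Set Implicit Arguments.
Unset Strict Implicit.
Unset Printing Implicit Defensive.

Local Open Scope classical_set_scope.
Local Open Scope group_scope.

Definition equiv_rel (X : Type) (e : set (X * X)) : Prop :=
  [/\ forall x, e (x, x),
      forall x y, e (x, y) -> e (y, x)
    & forall x y z, e (x, y) -> e (y, z) -> e (x, z)].

Definition equiv_base (X : uniformType) (B : set (set (X * X))) : Prop :=
  [/\ forall e, B e -> entourage e,
      forall E, entourage E -> exists2 e, B e & e `<=` E
    & forall e, B e -> equiv_rel e].

Definition group_hom (G H : groupType) (f : G -> H) : Prop :=
  forall x y, f (x * y) = f x * f y.

Definition is_free_group (S : Type) (F : groupType) (i : S -> F) : Prop :=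
  forall (H : groupType) (f : S -> H),
    exists phi : F -> H,
      [/\ group_hom phi, forall s, phi (i s) = f s
        & forall psi : F -> H, group_hom psi -> (forall s, psi (i s) = f s) ->
            forall g, psi g = phi g].

Definition is_topology (T : Type) (tau : set (set T)) : Prop :=
  [/\ tau setT,
      forall A B, tau A -> tau B -> tau (A `&` B)
    & forall (I : Type) (A : I -> set T), (forall i, tau (A i)) ->
        tau (\bigcup_i A i)].

Definition nbhd_of (T : Type) (tau : set (set T)) (x : T) (U : set T) : Prop :=
  exists O, [/\ tau O, O x & O `<=` U].

Definition nbhd_base (T : Type) (tau : set (set T)) (x : T)
    (N : set (set T)) : Prop :=
  (forall V, N V -> nbhd_of tau x V) /\
  (forall U, nbhd_of tau x U -> exists2 V, N V & V `<=` U).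

Definition cont (T T' : Type) (tau : set (set T)) (tau' : set (set T'))
    (f : T -> T') : Prop :=
  forall O, tau' O -> tau (f @^-1` O).

Definition hausdorff (T : Type) (tau : set (set T)) : Prop :=
  forall x y, x <> y -> exists U V,
    [/\ tau U, tau V, U x, V y & U `&` V = set0].

Definition gen_topology (T : Type) (S : set (set T)) : set (set T) :=
  [set O | forall tau, is_topology tau -> S `<=` tau -> tau O].

Definition is_subgroup (G : groupType) (A : set G) : Prop :=
  [/\ A 1, forall x y, A x -> A y -> A (x * y) & forall x, A x -> A x^-1].

Definition top_group (G : groupType) (tau : set (set G)) : Prop :=
  [/\ is_topology tau,
      (forall O x y, tau O -> O (x * y) ->
         exists U V, [/\ tau U, tau V, U x, V y &
           forall u v, U u -> V v -> O (u * v)])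
    & cont tau tau (fun x : G => x^-1)].

Definition non_arch (G : groupType) (tau : set (set G)) : Prop :=
  nbhd_base tau 1 [set H | tau H /\ is_subgroup H].

Definition left_unif (G : groupType) (tau : set (set G)) : set (set (G * G)) :=
  [set E | exists2 U, nbhd_of tau 1 U &
     [set gh : G * G | U (gh.1^-1 * gh.2)] `<=` E].
Definition right_unif (G : groupType) (tau : set (set G)) : set (set (G * G)) :=
  [set E | exists2 U, nbhd_of tau 1 U &
     [set gh : G * G | U (gh.2 * gh.1^-1)] `<=` E].
Definition two_sided_unif (G : groupType) (tau : set (set G))
    : set (set (G * G)) :=
  [set E | exists2 U, nbhd_of tau 1 U &
     [set gh : G * G | U (gh.1^-1 * gh.2) /\ U (gh.2 * gh.1^-1)] `<=` E].

Definition balanced (G : groupType) (tau : set (set G)) : Prop :=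
  left_unif tau = right_unif tau.

Definition unif_cont_2 (X : uniformType) (G : groupType) (tau : set (set G))
    (f : X -> G) : Prop :=
  forall E, two_sided_unif tau E -> entourage [set xy : X * X | E (f xy.1, f xy.2)].

Definition is_free_NA (bal : bool) (X : uniformType) (F : groupType)
    (i : X -> F) (tau : set (set F)) : Prop :=
  [/\ top_group tau /\ hausdorff tau, non_arch tau, (bal -> balanced tau),
      unif_cont_2 tau i
    & forall (H : groupType) (sigma : set (set H)),
        top_group sigma -> hausdorff sigma -> non_arch sigma ->
        (bal -> balanced sigma) ->
        forall f : X -> H, unif_cont_2 sigma f ->
        exists phi : F -> H,
          [/\ group_hom phi, cont tau sigma phi, forall x, phi (i x) = f x
            & forall psi : F -> H, group_hom psi -> cont tau sigma psi ->
                (forall x, psi (i x) = f x) -> forall g, psi g = phi g]].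

Definition is_FNA := is_free_NA false.
Definition is_FNAb := is_free_NA true.

Section FreeSets.
Variables (X : Type) (F : groupType) (i : X -> F).

Definition j2 (e : set (X * X)) : set F :=
  [set g | exists x y, e (x, y) /\ g = (i x)^-1 * i y].
Definition j2s (e : set (X * X)) : set F :=
  [set g | exists x y, e (x, y) /\ g = i x * (i y)^-1].

Definition Vpsi (psi : F -> set (X * X)) : set F :=
  [set g | exists w v, (j2 (psi w) v \/ j2s (psi w) v) /\ g = w * v * w^-1].

Definition tilde (e : set (X * X)) : set F := Vpsi (fun _ => e).
End FreeSets.

Fixpoint setpow (G : groupType) (A : set G) (n : nat) : set G :=
  match n with
  | 0 => [set 1]
  | n.+1 => [set g | exists a b, [/\ A a, setpow A n b & g = a * b]]
  end.
Definition gen_subgroup (G : groupType) (A : set G) : set G :=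
  \bigcup_(n in [set: nat]) setpow A n.

Definition eclass (X : Type) (e : set (X * X)) (x : X) : set X :=
  [set y | e (x, y)].
Definition quot (X : Type) (e : set (X * X)) : Type :=
  {A : set X | exists x, A = eclass e x}.
Definition qmap (X : Type) (e : set (X * X)) (x : X) : quot e :=
  exist _ (eclass e x) (ex_intro _ x erefl).

From Pilot Require Import Defs.
From HB Require Import structures.
From mathcomp Require Import all_boot.
From mathcomp Require Import boolp classical_sets topology.
Local Open Scope classical_set_scope.
Local Open Scope group_scope.
Set Implicit Arguments.
Unset Strict Implicit.
Set Warnings "-redundant-canonical-projection".

(* Let sigma be the topology generated by the subgroups H :&: [V_psi], with H an
   open subgroup of tau and psi ranging over a family closed under meets and left
   shifts.  It is a non-archimedean group topology finer than tau for which the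
   basis map is still uniformly continuous, and it is balanced when tau is and the
   psi are constant.  Universality of tau makes the identity tau -> sigma
   continuous, so every [V_psi] is a tau-neighbourhood of 1.  Conversely an open
   subgroup H contains [V_psi] as soon as x psi(w) y forces w x^-1 y w^-1 and
   w y x^-1 w^-1 into H, and uniform continuity of the basis map conjugated by w
   provides such a psi(w) (a single e when tau is balanced).  Finally [e~] is the
   kernel of fbar_e: sending each class back to a representative gives an
   endomorphism of F(X) which is the identity modulo [e~], and a group topology
   with a base of kernels at 1 is the weak topology of the corresponding maps. *)

Lemma group_hom1 (G H : groupType) (f : G -> H) : group_hom f -> f 1 = 1.
Proof. by move=> hf; apply: (@mulgI _ (f 1)); rewrite -hf !mulg1. Qed.

Lemma group_homV (G H : groupType) (f : G -> H) :
  group_hom f -> forall x, f x^-1 = (f x)^-1.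
Proof. by move=> hf x; apply: (@mulgI _ (f x)); rewrite -hf !mulgV group_hom1. Qed.

Lemma subgroup1 (G : groupType) (K : set G) : is_subgroup K -> K 1.
Proof. by case. Qed.

Lemma is_subgroupI (G : groupType) (H1 H2 : set G) :
  is_subgroup H1 -> is_subgroup H2 -> is_subgroup (H1 `&` H2).
Proof.
case=> a1 b1 c1 [a2 b2 c2]; split=> //.
- by move=> x y [? ?] [? ?]; split; [apply: b1 | apply: b2].
- by move=> x [? ?]; split; [apply: c1 | apply: c2].
Qed.

Definition is_normal (G : groupType) (N : set G) : Prop :=
  is_subgroup N /\ forall a u, N u -> N (a * u * a^-1).

Definition subgroup_type (G : groupType) (K : set G) (hK : is_subgroup K) :=
  {w : G | K w}.
HB.instance Definition _ (G : groupType) (K : set G) (hK : is_subgroup K) :=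
  gen_eqMixin (subgroup_type hK).
HB.instance Definition _ (G : groupType) (K : set G) (hK : is_subgroup K) :=
  gen_choiceMixin (subgroup_type hK).

Section SubgroupType.
Variables (G : groupType) (K : set G) (hK : is_subgroup K).

Definition subgroup_one : subgroup_type hK :=
  exist _ 1 (let: And3 h _ _ := hK in h).
Definition subgroup_mul (a b : subgroup_type hK) : subgroup_type hK :=
  exist _ (sval a * sval b) (let: And3 _ h _ := hK in h _ _ (svalP a) (svalP b)).
Definition subgroup_inv (a : subgroup_type hK) : subgroup_type hK :=
  exist _ (sval a)^-1 (let: And3 _ _ h := hK in h _ (svalP a)).

Lemma subgroup_val_inj (a b : subgroup_type hK) : sval a = sval b -> a = b.
Proof. exact: (@eq_sig_hprop G K (fun _ => @Prop_irrelevance _)). Qed.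

Lemma subgroup_mulA : associative subgroup_mul.
Proof. by move=> a b c; apply: subgroup_val_inj; rewrite /= mulgA. Qed.
Lemma subgroup_mul1g : left_id subgroup_one subgroup_mul.
Proof. by move=> a; apply: subgroup_val_inj; rewrite /= mul1g. Qed.
Lemma subgroup_mulg1 : right_id subgroup_one subgroup_mul.
Proof. by move=> a; apply: subgroup_val_inj; rewrite /= mulg1. Qed.
Lemma subgroup_mulVg : left_inverse subgroup_one subgroup_inv subgroup_mul.
Proof. by move=> a; apply: subgroup_val_inj; rewrite /= mulVg. Qed.
Lemma subgroup_mulgV : right_inverse subgroup_one subgroup_inv subgroup_mul.
Proof. by move=> a; apply: subgroup_val_inj; rewrite /= mulgV. Qed.
End SubgroupType.

HB.instance Definition _ (G : groupType) (K : set G) (hK : is_subgroup K) :=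
  isGroup.Build (subgroup_type hK) (@subgroup_mulA G K hK) (@subgroup_mul1g G K hK)
    (@subgroup_mulg1 G K hK) (@subgroup_mulVg G K hK) (@subgroup_mulgV G K hK).

Section FreeGroup.
Variables (S : Type) (F : groupType) (i : S -> F) (hF : is_free_group i).

Lemma free_hom_id (phi : F -> F) : group_hom phi -> (forall s, phi (i s) = i s) ->
  forall g, phi g = g.
Proof.
move=> hphi hi g; have [phi0 [_ _ huniq]] := @hF F i.
by rewrite (huniq phi hphi hi) -(huniq id (fun _ _ => erefl) (fun _ => erefl)).
Qed.

Lemma free_subgroup_ind (K : set F) : is_subgroup K -> (forall s, K (i s)) ->
  forall w, K w.
Proof.
move=> hK hi; have [phi [hphi phi_i _]] := @hF (subgroup_type hK) (fun s => exist _ _ (hi s)).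
move=> w; have <- : sval (phi w) = w.
  by apply: (free_hom_id (phi := fun w => sval (phi w))) => [a b|s]; rewrite ?hphi ?phi_i.
exact: svalP.
Qed.

Lemma free_hom_id_mod (N : set F) (h : F -> F) : is_normal N -> group_hom h ->
  (forall s, N ((i s)^-1 * h (i s))) -> forall w, N (w^-1 * h w).
Proof.
move=> [[N1 NM NV] Nconj] hh hi; apply: free_subgroup_ind hi; split.
- by rewrite (group_hom1 hh) invg1 mulg1.
- move=> a b ha hb; rewrite hh.
  have -> : (a * b)^-1 * (h a * h b) = (b^-1 * (a^-1 * h a) * b^-1^-1) * (b^-1 * h b).
    by rewrite invgK invgM !mulgA mulgK.
  by apply: NM => //; apply: Nconj.
- move=> a ha; rewrite (group_homV hh) invgK.
  have -> : a * (h a)^-1 = a * (a^-1 * h a)^-1 * a^-1.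
    by rewrite invgM invgK mulgA mulgK.
  by apply: Nconj; apply: NV.
Qed.

End FreeGroup.

Section GeneratedSubgroup.
Variable G : groupType.
Implicit Types (A H : set G).

Lemma gen_subgroupP A g : gen_subgroup A g <-> exists n, setpow A n g.
Proof. by split; [case=> n _ h; exists n | case=> n h; exists n]. Qed.

Lemma setpowD A m n a b : setpow A m a -> setpow A n b -> setpow A (m + n) (a * b).
Proof.
elim: m a => [|m IH] a /=; first by move=> -> hb; rewrite mul1g.
move=> [c [d [hc hd ->]]] hb; exists c, (d * b); split=> //; last by rewrite mulgA.
exact: IH.
Qed.

Lemma gen_subgroup_incl A a : A a -> gen_subgroup A a.
Proof. by move=> ha; apply/gen_subgroupP; exists 1%N, a, 1; rewrite mulg1. Qed.

Lemma gen_subgroup1 A : gen_subgroup A 1.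
Proof. by apply/gen_subgroupP; exists 0%N. Qed.

Lemma gen_subgroupM A a b :
  gen_subgroup A a -> gen_subgroup A b -> gen_subgroup A (a * b).
Proof.
move=> /gen_subgroupP[m hm] /gen_subgroupP[n hn]; apply/gen_subgroupP.
by exists (m + n)%N; apply: setpowD.
Qed.

Lemma gen_subgroup_ind A (P : G -> Prop) : P 1 ->
  (forall a b, A a -> P b -> P (a * b)) -> forall g, gen_subgroup A g -> P g.
Proof.
move=> P1 PM g /gen_subgroupP[n]; elim: n g => [|n IH] g /=; first by move=> ->.
by move=> [a [b [ha hb ->]]]; apply: PM => //; apply: IH.
Qed.

Lemma gen_subgroupV A : (forall a, A a -> A a^-1) ->
  forall g, gen_subgroup A g -> gen_subgroup A g^-1.
Proof.
move=> hA; apply: gen_subgroup_ind; first by rewrite invg1; apply: gen_subgroup1.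
move=> a b ha hb; rewrite invgM; apply: gen_subgroupM => //.
exact: gen_subgroup_incl (hA _ ha).
Qed.

Lemma gen_subgroup_is_subgroup A : (forall a, A a -> A a^-1) ->
  is_subgroup (gen_subgroup A).
Proof.
by move=> hA; split; [apply: gen_subgroup1 | apply: gen_subgroupM | apply: gen_subgroupV].
Qed.

Lemma gen_subgroup_min A H : is_subgroup H -> A `<=` H -> gen_subgroup A `<=` H.
Proof. by case=> H1 HM _ AH; apply: gen_subgroup_ind => // a b /AH; apply: HM. Qed.

Lemma gen_subgroup_conj A A' a : (forall u, A u -> A' (a * u * a^-1)) ->
  forall u, gen_subgroup A u -> gen_subgroup A' (a * u * a^-1).
Proof.
move=> hA; apply: gen_subgroup_ind; first by rewrite mulg1 mulgV; apply: gen_subgroup1.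
move=> u v hu hv; have -> : a * (u * v) * a^-1 = a * u * a^-1 * (a * v * a^-1).
  by rewrite !mulgA mulgVK.
by apply: gen_subgroupM => //; apply: gen_subgroup_incl; apply: hA.
Qed.

End GeneratedSubgroup.

Lemma open_from_local (T : Type) (tau : set (set T)) (O : set T) : is_topology tau ->
  (forall g, O g -> exists W, [/\ tau W, W g & W `<=` O]) -> tau O.
Proof.
case=> _ _ tauU hloc; pose I := {g | O g}.
have W (s : I) : {W | [/\ tau W, W (sval s) & W `<=` O]}.
  by apply: cid; apply: hloc; apply: svalP.
suff -> : O = \bigcup_(s : I) sval (W s) by apply: tauU => s; case: (svalP (W s)).
apply/seteqP; split; last by move=> g [s _]; case: (svalP (W s)) => _ _; apply.
by move=> g Og; exists (exist _ g Og) => //; case: (svalP (W (exist _ g Og))).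
Qed.

Lemma nbhd_of_open (T : Type) (tau : set (set T)) (O : set T) (x : T) :
  tau O -> O x -> nbhd_of tau x O.
Proof. by move=> hO Ox; exists O; split. Qed.

Section TopologicalGroup.
Variables (G : groupType) (tau : set (set G)) (htg : top_group tau).

Lemma open_translate (O : set G) (a : G) : tau O -> tau [set u | O (a * u)].
Proof.
case: htg => htop hM _ hO; apply: open_from_local => // g Og.
have [U [V [_ hV Ua Vg hUV]]] := hM _ _ _ hO Og.
by exists V; split=> // v Vv; apply: hUV.
Qed.

Lemma nbhd_conj (U : set G) (w : G) : nbhd_of tau 1 U ->
  nbhd_of tau 1 [set u | U (w * u * w^-1)].
Proof.
move=> [O [hO O1 OU]]; case: htg => _ hM _.
have O1' : O (w * 1 * w^-1) by rewrite mulg1 mulgV.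
have [U1 [V1 [hU1 _ U1w V1w hUV1]]] := hM _ _ _ hO O1'.
have [U2 [V2 [_ hV2 U2w V21 hUV2]]] := hM _ _ _ hU1 U1w.
by exists V2; split=> // g V2g; apply: OU; apply: hUV1 => //; apply: hUV2.
Qed.

Hypothesis hna : non_arch tau.

Lemma non_arch_subgroup (U : set G) : nbhd_of tau 1 U ->
  exists H, [/\ tau H, is_subgroup H & H `<=` U].
Proof. by case: hna => _ /[apply] -[H [tH sH] HU]; exists H. Qed.

Lemma balanced_conj_subgroup (U : set G) : balanced tau -> nbhd_of tau 1 U ->
  exists H, [/\ tau H, is_subgroup H & forall w u, H u -> U (w * u * w^-1)].
Proof.
move=> hbal hU; have : right_unif tau [set gh | U (gh.2 * gh.1^-1)] by exists U.
rewrite -hbal => -[W /non_arch_subgroup [H [tH sH HW]] hWE].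
exists H; split=> // w u Hu.
by have /= := hWE (w, w * u); rewrite mulKg; apply; apply: HW.
Qed.

End TopologicalGroup.

Lemma kernel_base_topology (G : groupType) (tau : set (set G))
    (I : Type) (P : set I) (H : I -> groupType) (f : forall e, G -> H e) :
  top_group tau -> (forall e, P e -> group_hom (f e)) ->
  nbhd_base tau 1 [set S | exists2 e, P e & S = f e @^-1` [set 1]] ->
  tau = gen_topology [set O | exists e, exists2 A : set (H e), P e & O = f e @^-1` A].
Proof.
move=> htg hf [base_nbhd base_sub]; have [htop _ _] := htg.
apply/seteqP; split=> O hO.
  move=> tau' htop' hsub; apply: open_from_local => // g Og.
  have O1 : [set u | O (g * u)] 1 by rewrite /= mulg1.
  have [_ [e he ->] ker_sub] := base_sub _ (nbhd_of_open (open_translate htg g hO) O1).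
  exists (f e @^-1` [set f e g]); split=> //; first by apply: hsub; exists e, [set f e g].
  move=> u /= fu; have /ker_sub : f e (g^-1 * u) = 1.
    by rewrite (hf _ he) (group_homV (hf _ he)) fu mulVg.
  by rewrite /= mulVKg.
apply: hO => // _ [e [A he ->]]; apply: open_from_local => // g Ag.
have [W [tW W1 W_ker]] := base_nbhd _ (ex_intro2 _ _ e he erefl).
exists [set u | W (g^-1 * u)]; split; first exact: (open_translate htg g^-1 tW).
  by rewrite /= mulVg.
by move=> u /W_ker /= fu; rewrite -(mulVKg g u) (hf _ he) fu mulg1.
Qed.

Section CosetTopology.
Variables (G : groupType) (Nf : set (set G)).
Hypotheses (Nsub : forall N, Nf N -> is_subgroup N) (Nne : exists N, Nf N)
  (NI : forall N1 N2, Nf N1 -> Nf N2 -> exists2 N3, Nf N3 & N3 `<=` N1 `&` N2)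
  (Nconj : forall N a, Nf N -> exists2 N', Nf N' & forall u, N' u -> N (a^-1 * u * a)).

Definition coset_topology : set (set G) :=
  [set O | forall g, O g -> exists2 N, Nf N & forall u, N u -> O (g * u)].

Lemma coset_topology_is_topology : is_topology coset_topology.
Proof.
split.
- by move=> g _; case: Nne => N hN; exists N.
- move=> A B hA hB g [Ag Bg].
  have [N1 h1 h1'] := hA _ Ag; have [N2 h2 h2'] := hB _ Bg.
  have [N3 h3 h3'] := NI h1 h2.
  by exists N3 => // u /h3' [? ?]; split; [apply: h1' | apply: h2'].
- move=> I A hA g [j _ Ajg]; have [N hN hN'] := hA j _ Ajg.
  by exists N => // u /hN' h; exists j.
Qed.

Lemma coset_topology_coset N x : Nf N -> coset_topology [set u | N (x^-1 * u)].
Proof.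
move=> hN g Ng; exists N => // u Nu; have [_ hM _] := Nsub hN.
by rewrite /= mulgA; apply: hM.
Qed.

Lemma coset_topology_base N : Nf N -> coset_topology N.
Proof.
by move=> hN g Ng; exists N => // u; have [_ hM _] := Nsub hN; apply: hM.
Qed.

Lemma coset_topology_top_group : top_group coset_topology.
Proof.
split; first exact: coset_topology_is_topology.
- move=> O x y hO Oxy; have [N hN hN'] := hO _ Oxy.
  have [N' hN'f hN'c] := Nconj y hN; have [N3 h3 h3'] := NI hN hN'f.
  have [N31 _ _] := Nsub h3; have [_ hM _] := Nsub hN.
  exists [set u | N3 (x^-1 * u)], [set v | N3 (y^-1 * v)].
  split; rewrite /= ?mulVg //; try exact: coset_topology_coset.
  move=> u v /h3' [_ hu] /h3' [hv _].
  have -> : u * v = x * y * ((y^-1 * (x^-1 * u) * y) * (y^-1 * v)).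
    by rewrite !mulgA !mulgK mulgV mul1g.
  by apply: hN'; apply: hM => //; apply: hN'c.
- move=> O hO g Og; have [N hN hN'] := hO _ Og.
  have [N' hN'f hN'c] := Nconj g^-1 hN; have [_ _ hV] := Nsub hN'f.
  exists N' => // u /hV /hN'c; rewrite invgK /= => h.
  have -> : (g * u)^-1 = g^-1 * (g * u^-1 * g^-1) by rewrite invgM mulgA mulKg.
  exact: hN'.
Qed.

Lemma coset_topology_non_arch : non_arch coset_topology.
Proof.
split; first by move=> H [hH hS]; apply: nbhd_of_open => //; apply: subgroup1.
move=> U [O [hO O1 OU]]; have [N hN hN'] := hO _ O1.
exists N; first by split; [apply: coset_topology_base | apply: Nsub].
by move=> u /hN'; rewrite mul1g; apply: OU.
Qed.

Lemma coset_topology_balanced :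
  (forall N, Nf N -> exists2 N', Nf N' & forall g u, N' u -> N (g^-1 * u * g)) ->
  balanced coset_topology.
Proof.
move=> hU; apply/seteqP; split => E [U [O [hO O1 OU]] hE];
  have [N hN hN'] := hO _ O1; have [N' hN'f hN'c] := hU _ hN;
  (exists N'; first by apply: nbhd_of_open;
     [apply: coset_topology_base | apply: subgroup1; apply: Nsub]);
  move=> [g h] /= hgh; apply: hE; apply: OU; rewrite /= -[_ * _]mul1g; apply: hN'.
- by have := hN'c g _ hgh; rewrite mulgA mulgVK.
- by have := hN'c g^-1 _ hgh; rewrite invgK mulVKg.
Qed.

End CosetTopology.

Lemma equiv_rel_sym (X : Type) (e : set (X * X)) x y :
  Defs.equiv_rel e -> e (x, y) -> e (y, x).
Proof. by move=> [_ hsym _] /hsym. Qed.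

Lemma kernel_normal (G H : groupType) (f : G -> H) :
  group_hom f -> is_normal (f @^-1` [set 1]).
Proof.
move=> hf; split; first split.
- exact: group_hom1.
- by move=> x y /= fx fy; rewrite hf fx fy mulg1.
- by move=> x /= fx; rewrite (group_homV hf) fx invg1.
- by move=> a u /= fu; rewrite !hf fu mulg1 -hf mulgV group_hom1.
Qed.

Section Vpsi.
Variables (X : Type) (F : groupType) (i : X -> F).
Implicit Types (psi : F -> set (X * X)) (e : set (X * X)).

Lemma Vpsi_j2 psi x y : psi 1 (x, y) -> Vpsi i psi ((i x)^-1 * i y).
Proof. by move=> h; exists 1, ((i x)^-1 * i y); rewrite invg1 mulg1 mul1g; split; [left; exists x, y|]. Qed.

Lemma Vpsi_j2s psi x y : psi 1 (x, y) -> Vpsi i psi (i x * (i y)^-1).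
Proof. by move=> h; exists 1, (i x * (i y)^-1); rewrite invg1 mulg1 mul1g; split; [right; exists x, y|]. Qed.

Lemma gen_Vpsi_conj psi psi' a : (forall w, psi' w `<=` psi (a * w)) ->
  forall u, gen_subgroup (Vpsi i psi') u -> gen_subgroup (Vpsi i psi) (a * u * a^-1).
Proof.
move=> hs; apply: gen_subgroup_conj => _ [w [v [hv ->]]].
exists (a * w), v; split; last by rewrite invgM !mulgA.
by case: hv => -[x [y [/hs hxy ->]]]; [left | right]; exists x, y.
Qed.

Lemma gen_VpsiS psi psi' : (forall w, psi' w `<=` psi w) ->
  gen_subgroup (Vpsi i psi') `<=` gen_subgroup (Vpsi i psi).
Proof.
move=> hs u /(@gen_Vpsi_conj psi psi' 1); rewrite invg1 mul1g mulg1; apply.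
by move=> w; rewrite mul1g.
Qed.

Variable psi : F -> set (X * X).
Hypothesis psi_equiv : forall w, Defs.equiv_rel (psi w).

Lemma gen_Vpsi_subgroup : is_subgroup (gen_subgroup (Vpsi i psi)).
Proof.
apply: gen_subgroup_is_subgroup => _ [w [v [hv ->]]].
exists w, v^-1; split; last by rewrite !invgM invgK mulgA.
by case: hv => -[x [y [hxy ->]]]; [left | right]; exists y, x;
  rewrite invgM invgK; split=> //; apply: equiv_rel_sym hxy.
Qed.

Lemma gen_Vpsi_min (H : set F) : is_subgroup H ->
  (forall w x y, psi w (x, y) ->
     H (w * ((i x)^-1 * i y) * w^-1) /\ H (w * (i y * (i x)^-1) * w^-1)) ->
  gen_subgroup (Vpsi i psi) `<=` H.
Proof.
move=> sH hH; apply: gen_subgroup_min => // _ [w [v [[] [x [y [hxy ->]]] ->]]].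
- by case: (hH _ _ _ hxy).
- by case: (hH _ _ _ (equiv_rel_sym (psi_equiv w) hxy)).
Qed.

End Vpsi.

Lemma gen_tilde_normal (X : Type) (F : groupType) (i : X -> F) e :
  Defs.equiv_rel e -> is_normal (gen_subgroup (tilde i e)).
Proof.
move=> he; split; first exact: (@gen_Vpsi_subgroup _ _ i (fun _ => e) (fun _ => he)).
by move=> a; apply: (@gen_Vpsi_conj _ _ i (fun _ => e) (fun _ => e) a (fun _ _ h => h)).
Qed.

Section QuotientKernel.
Variables (X : Type) (e : set (X * X)) (he : Defs.equiv_rel e).
Variables (F : groupType) (i : X -> F) (hF : is_free_group i).
Variables (Fq : groupType) (iq : quot e -> Fq) (hFq : is_free_group iq).
Variables (fbar : F -> Fq) (hfbar : group_hom fbar)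
  (fbar_i : forall x, fbar (i x) = iq (qmap e x)).

Lemma qmap_eq x y : e (x, y) -> qmap e x = qmap e y.
Proof.
case: he => _ hsym htr hxy; apply: (eq_sig_hprop (fun _ => @Prop_irrelevance _)).
by apply/seteqP; split=> z /=; [apply: htr; apply: hsym | apply: htr].
Qed.

Lemma kernel_quot_hom : fbar @^-1` [set 1] = gen_subgroup (tilde i e).
Proof.
apply/seteqP; split; last first.
  have [kerS kerJ] := kernel_normal hfbar.
  apply: (gen_Vpsi_min (psi := fun _ => e) (fun _ => he) kerS) => w x y /qmap_eq hxy.
  by split; apply: kerJ;
    by rewrite /= hfbar (group_homV hfbar) !fbar_i hxy ?mulVg ?mulgV.
have rep (q : quot e) : {x | sval q = eclass e x} by case: q => A hA; apply: cid.
have e_rep x : e (x, sval (rep (qmap e x))).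
  case: he => hrefl hsym _; apply: hsym.
  have hr : eclass e x = eclass e (sval (rep (qmap e x))) := svalP (rep (qmap e x)).
  have : eclass e x x by apply: hrefl.
  by rewrite hr.
have [lift [hlift lift_iq _]] := @hFq F (fun q => i (sval (rep q))).
have hh : group_hom (lift \o fbar) by move=> a b; rewrite /= hfbar hlift.
have hmod := free_hom_id_mod hF (gen_tilde_normal i he) hh.
have {}hmod w : gen_subgroup (tilde i e) (w^-1 * lift (fbar w)).
  apply: hmod => x; rewrite /= fbar_i lift_iq.
  by apply: gen_subgroup_incl; apply: Vpsi_j2; apply: e_rep.
have [[_ _ tildeV] _] := gen_tilde_normal i he.
by move=> w /= fw1; have := hmod w; rewrite fw1 group_hom1 // mulg1 => /tildeV; rewrite invgK.
Qed.

End QuotientKernel.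

Section FreeNonArchimedean.
Variables (X : uniformType) (B : set (set (X * X))) (hB : equiv_base B)
  (F : groupType) (i : X -> F) (hF : is_free_group i).

Lemma equiv_base_equiv e : B e -> Defs.equiv_rel e.
Proof. by case: hB => _ _; apply. Qed.

Lemma equiv_base_entourage e : B e -> entourage e.
Proof. by case: hB => + _ _; apply. Qed.

Lemma equiv_base_sub (E : set (X * X)) : entourage E -> {e | B e & e `<=` E}.
Proof. by move=> hE; apply: cid2; case: hB => _ + _; apply. Qed.

Lemma equiv_baseI e1 e2 : B e1 -> B e2 -> {e | B e & e `<=` e1 `&` e2}.
Proof.
move=> h1 h2; apply: equiv_base_sub.
by apply: filterI; apply: equiv_base_entourage.
Qed.

Lemma unif_cont_2_entourage (tau : set (set F)) (U : set F) :
  unif_cont_2 tau i -> nbhd_of tau 1 U ->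
  entourage [set xy : X * X | U ((i xy.1)^-1 * i xy.2) /\ U (i xy.2 * (i xy.1)^-1)].
Proof.
move=> huc hU; apply: (huc [set gh | U (gh.1^-1 * gh.2) /\ U (gh.2 * gh.1^-1)]).
by exists U.
Qed.

Section UniversalRefinement.
Variables (bal : bool) (tau : set (set F)) (htau : is_free_NA bal i tau)
  (Psi : set (F -> set (X * X))).
Hypotheses (Psi_B : forall psi, Psi psi -> forall w, B (psi w))
  (Psi_ne : exists psi, Psi psi)
  (Psi_I : forall psi1 psi2, Psi psi1 -> Psi psi2 ->
     exists2 psi3, Psi psi3 & forall w, psi3 w `<=` psi1 w `&` psi2 w)
  (Psi_shift : forall psi a, Psi psi ->
     exists2 psi', Psi psi' & forall w, psi' w `<=` psi (a * w))
  (Psi_const : bal -> forall psi, Psi psi -> forall a w, psi (a * w) = psi w).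

Let htg : top_group tau. Proof. by case: htau => -[]. Qed.
Let hna : non_arch tau. Proof. by case: htau. Qed.

Let Psi_equiv psi : Psi psi -> forall w, Defs.equiv_rel (psi w).
Proof. by move=> hpsi w; apply: equiv_base_equiv; apply: Psi_B. Qed.

Definition refined_base : set (set F) := [set N | exists H psi,
  [/\ tau H, is_subgroup H, Psi psi & N = H `&` gen_subgroup (Vpsi i psi)]].

Lemma refined_base_subgroup N : refined_base N -> is_subgroup N.
Proof.
case=> H [psi [_ sH /Psi_equiv hpsi ->]].
by apply: is_subgroupI => //; apply: gen_Vpsi_subgroup.
Qed.

Lemma refined_base_setT psi : Psi psi -> refined_base (setT `&` gen_subgroup (Vpsi i psi)).
Proof. by move=> hpsi; exists setT, psi; split=> //; case: htg => -[]. Qed.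

Lemma refined_base_ne : exists N, refined_base N.
Proof. by case: Psi_ne => psi /refined_base_setT; exists (setT `&` gen_subgroup (Vpsi i psi)). Qed.

Lemma refined_baseI N1 N2 : refined_base N1 -> refined_base N2 ->
  exists2 N3, refined_base N3 & N3 `<=` N1 `&` N2.
Proof.
case=> H1 [psi1 [tH1 sH1 p1 ->]] [H2 [psi2 [tH2 sH2 p2 ->]]].
have [psi3 p3 h3] := Psi_I p1 p2.
have sub3 k : gen_subgroup (Vpsi i psi3) `<=` gen_subgroup (Vpsi i (if k then psi1 else psi2)).
  by apply: gen_VpsiS => w z /h3 []; case: k.
exists (H1 `&` H2 `&` gen_subgroup (Vpsi i psi3)).
  exists (H1 `&` H2), psi3; split=> //; last exact: is_subgroupI.
  by case: htg => -[_ tauI _] _ _; apply: tauI.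
by move=> u [[h1 h2] hg]; split; split=> //; [apply: (sub3 true) | apply: (sub3 false)].
Qed.

Lemma refined_base_conj N a : refined_base N ->
  exists2 N', refined_base N' & forall u, N' u -> N (a^-1 * u * a).
Proof.
case=> H [psi [tH sH p ->]].
have /(non_arch_subgroup hna) [H' [tH' sH' H'H]] :=
  nbhd_conj htg a^-1 (nbhd_of_open tH (subgroup1 sH)).
have [psi' p' hs] := Psi_shift a^-1 p.
exists (H' `&` gen_subgroup (Vpsi i psi')); first by exists H', psi'.
move=> u [/H'H h1 /(gen_Vpsi_conj hs) h2]; rewrite invgK in h1 h2; split=> //.
Qed.

Local Notation sigma := (coset_topology refined_base).

Lemma tau_sub_sigma O : tau O -> sigma O.
Proof.
move=> hO g Og.
have /(non_arch_subgroup hna) [H [tH sH HO]] :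
    nbhd_of tau 1 [set u | O (g * u)].
  by apply: nbhd_of_open (open_translate htg g hO) _; rewrite /= mulg1.
case: Psi_ne => psi hpsi.
by exists (H `&` gen_subgroup (Vpsi i psi)); [exists H, psi | move=> u [/HO]].
Qed.

Lemma sigma_unif_cont : unif_cont_2 sigma i.
Proof.
move=> E [U [O [hO O1 OU]] hE].
have [N [H [psi [tH sH p ->]]] hN] := hO _ O1.
have hH : nbhd_of tau 1 H by apply: nbhd_of_open => //; apply: subgroup1.
have e1 := unif_cont_2_entourage (let: And5 _ _ _ huc _ := htau in huc) hH.
have e2 := equiv_base_entourage (Psi_B p 1).
apply: filterS (filterI e1 e2) => -[x y] [[/= h1 h2] h3].
apply: hE; split; apply: OU; rewrite -[_ * _]mul1g; apply: hN; split=> //;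
  apply: gen_subgroup_incl; first exact: Vpsi_j2.
by apply: Vpsi_j2s; apply: equiv_rel_sym h3; apply: Psi_equiv.
Qed.

Lemma sigma_balanced : bal -> balanced sigma.
Proof.
move=> hb; apply: coset_topology_balanced => [|N]; first exact: refined_base_subgroup.
case=> H [psi [tH sH p ->]].
have hbt : balanced tau by case: htau => _ _ /(_ hb).
have [H' [tH' sH' H'H]] := balanced_conj_subgroup hna hbt (nbhd_of_open tH (subgroup1 sH)).
exists (H' `&` gen_subgroup (Vpsi i psi)); first by exists H', psi.
move=> g u [/(H'H g^-1) h1 h2]; rewrite invgK in h1; split=> //.
have := gen_Vpsi_conj (a := g^-1) _ h2; rewrite invgK; apply=> w.
by rewrite (Psi_const hb p).
Qed.

Lemma gen_Vpsi_nbhd psi : Psi psi -> nbhd_of tau 1 (gen_subgroup (Vpsi i psi)).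
Proof.
move=> hpsi; case: htau => -[_ thaus] _ _ _ huniv.
have sigma_haus : hausdorff sigma.
  move=> x y /thaus [U [V [tU tV Ux Vy UV]]].
  by exists U, V; split=> //; apply: tau_sub_sigma.
have [phi [hphi hcont phi_i _]] := huniv F sigma
  (coset_topology_top_group refined_base_subgroup refined_base_ne refined_baseI refined_base_conj)
  sigma_haus (coset_topology_non_arch refined_base_subgroup) sigma_balanced i sigma_unif_cont.
have hN := refined_base_setT hpsi.
have := hcont _ (coset_topology_base refined_base_subgroup hN).
rewrite (_ : phi @^-1` _ = setT `&` gen_subgroup (Vpsi i psi)); last first.
  by apply/seteqP; split=> g /=; rewrite (free_hom_id hF hphi phi_i).
move=> tN; exists (setT `&` gen_subgroup (Vpsi i psi)); split=> //.
by split=> //; apply: gen_subgroup1.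
Qed.

End UniversalRefinement.

Lemma FNA_gen_Vpsi_sub (tau : set (set F)) : is_FNA i tau ->
  forall U, nbhd_of tau 1 U ->
  exists2 psi : F -> set (X * X), (forall w, B (psi w)) & gen_subgroup (Vpsi i psi) `<=` U.
Proof.
case=> -[htg _] hna _ huc _ U /(non_arch_subgroup hna) [H [tH sH HU]].
have hH w := unif_cont_2_entourage huc (nbhd_conj htg w (nbhd_of_open tH (subgroup1 sH))).
pose psi w := s2val (equiv_base_sub (hH w)).
have psiB w : B (psi w) := s2valP (equiv_base_sub (hH w)).
exists psi => //; apply: subset_trans HU.
apply: gen_Vpsi_min => // [w|w x y /(s2valP' (equiv_base_sub (hH w)))] //.
exact: equiv_base_equiv.
Qed.

Lemma FNAb_gen_tilde_sub (tau : set (set F)) : is_FNAb i tau ->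
  forall U, nbhd_of tau 1 U -> exists2 e, B e & gen_subgroup (tilde i e) `<=` U.
Proof.
case=> -[htg _] hna /(_ erefl) hbal huc _ U /(non_arch_subgroup hna) [H [tH sH HU]].
have [H' [tH' sH' H'H]] := balanced_conj_subgroup hna hbal (nbhd_of_open tH (subgroup1 sH)).
have [e he e_sub] :=
  equiv_base_sub (unif_cont_2_entourage huc (nbhd_of_open tH' (subgroup1 sH'))).
exists e => //; apply: subset_trans HU.
apply: (gen_Vpsi_min (psi := fun _ => e)) => // [w|w x y /e_sub [h1 h2]].
  exact: equiv_base_equiv.
by split; apply: H'H.
Qed.

Lemma FNA_nbhd_base (tau : set (set F)) : is_FNA i tau ->
  nbhd_base tau 1 [set S | exists psi : F -> set (X * X),
                             (forall w, B (psi w)) /\ S = gen_subgroup (Vpsi i psi)].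
Proof.
move=> htau; split; last first.
  move=> U /(FNA_gen_Vpsi_sub htau) [psi hpsi hsub].
  by exists (gen_subgroup (Vpsi i psi)) => //; exists psi.
move=> _ [psi [hpsi ->]].
apply: (gen_Vpsi_nbhd htau (Psi := [set psi | forall w, B (psi w)])) => //.
- by exists (fun _ => s2val (equiv_base_sub entourageT)) => w; apply: s2valP.
- move=> psi1 psi2 h1 h2.
  exists (fun w => s2val (equiv_baseI (h1 w) (h2 w))) => w.
    exact: s2valP.
  by case: (equiv_baseI (h1 w) (h2 w)).
- by move=> psi' a hp; exists (fun w => psi' (a * w)) => // w t.
Qed.

Lemma FNAb_nbhd_base (tau : set (set F)) : is_FNAb i tau ->
  nbhd_base tau 1 [set S | exists2 e, B e & S = gen_subgroup (tilde i e)].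
Proof.
move=> htau; split; last first.
  move=> U /(FNAb_gen_tilde_sub htau) [e he hsub].
  by exists (gen_subgroup (tilde i e)) => //; exists e.
move=> _ [e he ->].
apply: (gen_Vpsi_nbhd htau (Psi := [set psi | exists2 e, B e & psi = fun _ => e])).
- by move=> _ [e' he' ->].
- by exists (fun _ => e), e.
- move=> _ _ [e1 h1 ->] [e2 h2 ->].
  have [e3 h3 h3'] := equiv_baseI h1 h2.
  by exists (fun _ => e3) => //; exists e3.
- by move=> psi a hp; exists psi => // w; case: hp => e' _ ->.
- by move=> _ _ [e' _ ->].
- by exists e.
Qed.

Lemma FNAb_weak_topology (Fq : set (X * X) -> groupType)
    (iq : forall e, quot e -> Fq e) (fbar : forall e, F -> Fq e) :
  (forall e, B e -> is_free_group (iq e)) ->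
  (forall e, B e -> group_hom (fbar e) /\ forall x, fbar e (i x) = iq e (qmap e x)) ->
  forall tau : set (set F), is_FNAb i tau ->
    tau = gen_topology [set O | exists e, exists2 A : set (Fq e), B e & O = fbar e @^-1` A].
Proof.
move=> hq hfbar tau htau; have [[htg _] _ _ _ _] := htau.
apply: kernel_base_topology => // [e /hfbar[]//|].
suff -> : [set S | exists2 e, B e & S = fbar e @^-1` [set 1]] =
          [set S | exists2 e, B e & S = gen_subgroup (tilde i e)].
  exact: FNAb_nbhd_base.
apply/seteqP; split=> _ [e he ->]; exists e => //; have [hf hfi] := hfbar e he;
  by rewrite (kernel_quot_hom (equiv_base_equiv he) hF (hq e he) hf hfi).
Qed.

End FreeNonArchimedean.

Unset Implicit Arguments.
Set Strict Implicit.
Theorem theorem4p13 (X : uniformType) (B : set (set (X * X)))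
  (hB : equiv_base B)
  (F : groupType) (i : X -> F) (hF : is_free_group i) :
  (* (1) *)
  (forall tau : set (set F), is_FNA i tau ->
     nbhd_base tau 1
       [set S | exists psi : F -> set (X * X),
                  (forall w, B (psi w)) /\ S = gen_subgroup (Vpsi i psi)]) /\
  (* (2)(a) *)
  (forall tau : set (set F), is_FNAb i tau ->
     nbhd_base tau 1
       [set S | exists2 e, B e & S = gen_subgroup (tilde i e)]) /\
  (* (2)(b) *)
  (forall (Fq : set (X * X) -> groupType)
          (iq : forall e, quot e -> Fq e)
          (fbar : forall e, F -> Fq e),
     (forall e, B e -> is_free_group (iq e)) ->
     (forall e, B e -> group_hom (fbar e) /\
                       forall x, fbar e (i x) = iq e (qmap e x)) ->
     forall tau : set (set F), is_FNAb i tau ->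
       tau = gen_topology
               [set O | exists e, exists2 A : set (Fq e),
                          B e & O = fbar e @^-1` A]).
Proof.
split; first exact: FNA_nbhd_base.
split; first exact: FNAb_nbhd_base.
exact: FNAb_weak_topology.
Qed.
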